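(* Let $\otimes$ and $\oplus$ be uninorms on $[0,1]$. If $\otimes$ satisfies property $B$ and $\oplus$ satisfies property $A'$, then $(\otimes,\oplus)$ satisfies the rearrangement inequality.
   Context: A uninorm is a function $\otimes:[0,1]^2\to[0,1]$ that is commutative, associative, monotonic ($x\leq y$ implies $x\otimes z\leq y\otimes z$), and has an identity element $e\in[0,1]$. A function $f$ (written $f(x,y)$ or $x\,f\,y$) satisfies property $B$ if for all $0\leq x\leq y\leq1$ and $0\leq z\leq w\leq 1$, $f(x,w)-f(x,z)\leq f(y,w)-f(y,z)$; property $A'$ if for all $0\leq x\leq y\leq z\leq w\leq 1$, $w+x\geq y+z$ implies $f(x,w)\geq f(y,z)$. The pair $(\otimes,\oplus)$ satisfies the rearrangement inequality if for every $n\geq1$, all $0\leq x_1\leq\cdots\leq x_n\leq 1$, $0\leq y_1\leq\cdots\leq y_n\leq 1$ and every permutation $\sigma$ of $\{1,\dots,n\}$, $$(x_n\otimes y_1)\oplus\cdots\oplus(x_1\otimes y_n)\leq (x_{\sigma(1)}\otimes y_1)\oplus\cdots\oplus(x_{\sigma(n)}\otimes y_n)\leq (x_1\otimes y_1)\oplus\cdots\oplus(x_n\otimes y_n).$$ *)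

From HB Require Import structures.
From mathcomp Require Import all_boot all_order all_algebra all_fingroup.
From mathcomp Require Import reals.
Set Implicit Arguments. Unset Strict Implicit. Unset Printing Implicit Defensive.
Import Order.TTheory GRing.Theory Num.Theory.
Local Open Scope ring_scope.

Section Defs.
Variable R : realType.

Definition unit_int (x : R) : bool := (0 <= x) && (x <= 1).

Definition uninorm (f : R -> R -> R) : Prop :=
  [/\ (forall x y, unit_int x -> unit_int y -> unit_int (f x y)),
      (forall x y, unit_int x -> unit_int y -> f x y = f y x),
      (forall x y z, unit_int x -> unit_int y -> unit_int z ->
          f x (f y z) = f (f x y) z),
      (forall x y z, unit_int x -> unit_int y -> unit_int z ->
          x <= y -> f x z <= f y z) &
      (exists2 e, unit_int e & forall x, unit_int x -> f e x = x)].

Definition propB (f : R -> R -> R) : Prop :=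
  forall x y z w, unit_int x -> unit_int y -> unit_int z -> unit_int w ->
    x <= y -> z <= w -> f x w - f x z <= f y w - f y z.

Definition propA' (f : R -> R -> R) : Prop :=
  forall x y z w, 0 <= x -> x <= y -> y <= z -> z <= w -> w <= 1 ->
    w + x >= y + z -> f x w >= f y z.

(* iterated operation a_1 f (a_2 f ( ... f a_k)) of a nonempty list
   (the value on the empty list is irrelevant and never used). *)
Fixpoint opsum (f : R -> R -> R) (s : seq R) : R :=
  match s with
  | [::] => 0
  | [:: a] => a
  | a :: s' => f a (opsum f s')
  end.

Definition rearrangement (tn sn : R -> R -> R) : Prop :=
  forall (n : nat) (x y : 'I_n -> R), (0 < n)%N ->
    (forall i, unit_int (x i)) -> (forall i, unit_int (y i)) ->
    (forall i j : 'I_n, (i <= j)%N -> x i <= x j) ->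
    (forall i j : 'I_n, (i <= j)%N -> y i <= y j) ->
    forall s : 'S_n,
      opsum sn [seq tn (x (rev_ord i)) (y i) | i <- enum 'I_n]
        <= opsum sn [seq tn (x (s i)) (y i) | i <- enum 'I_n]
      /\ opsum sn [seq tn (x (s i)) (y i) | i <- enum 'I_n]
        <= opsum sn [seq tn (x i) (y i) | i <- enum 'I_n].

End Defs.

(* Property B of [tn] says [tn a d - tn a c <= tn b d - tn b c] for [a <= b],
   [c <= d]; together with property A' of [sn] this gives the two-term
   exchange inequality [(b tn c) sn (a tn d) <= (a tn c) sn (b tn d)].
   Since [sn] is associative and commutative, its iterate is invariant under
   permutations, so any pairing of the [x]'s with the sorted [y]'s can be
   improved, one transposition at a time, into the sorted (resp. reversed)
   pairing, exactly as in the classical rearrangement inequality. *)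

From HB Require Import structures.
From mathcomp Require Import all_boot all_order all_algebra all_fingroup.
From mathcomp Require Import reals.
From mathcomp Require Import lra.
Set Implicit Arguments. Unset Strict Implicit. Unset Printing Implicit Defensive.
Import Order.TTheory Num.Theory.
Local Open Scope ring_scope.

Lemma perm_swap_heads (T : eqType) (a b : T) (m r : seq T) :
  perm_eq (a :: m ++ b :: r) (b :: m ++ a :: r).
Proof.
apply/seq.permP => p; rewrite /= !count_cat /=.
by rewrite addnCA (addnCA (p a)) [RHS]addnCA.
Qed.

Section FoldrAC.
Variables (T : eqType) (op : T -> T -> T) (z : T).
Hypotheses (opA : associative op) (opC : commutative op).

Lemma foldr_perm s t : perm_eq s t -> foldr op z s = foldr op z t.
Proof.
pose opAC : SemiGroup.com_law T := HB.pack op (SemiGroup.isComLaw.Build T op opA opC).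
by move=> st; rewrite !foldrE; apply: (@perm_big T opAC).
Qed.

Lemma foldr_cat_cons m b r :
  foldr op z (m ++ b :: r) = op b (foldr op z (m ++ r)).
Proof.
have mbr : perm_eq (m ++ b :: r) (b :: m ++ r) by rewrite -[b :: r]cat1s perm_catCA.
by rewrite (foldr_perm mbr).
Qed.

End FoldrAC.

Section Rearrangement.
Variables (X Y T : eqType) (leX : rel X) (leY : rel Y) (le : rel T).
Hypotheses (leX_trans : transitive leX) (leY_trans : transitive leY).
Hypotheses (le_refl : reflexive le) (le_trans : transitive le).
Variables (op : T -> T -> T) (z : T) (g : X -> Y -> T).
Hypotheses (opA : associative op) (opC : commutative op).
Hypothesis le_opl : forall u v w, le u v -> le (op u w) (op v w).
Hypothesis exchange : forall a b c d, leX a b -> leY c d ->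
  le (op (g b c) (g a d)) (op (g a c) (g b d)).

Definition pairsum (xs : seq X) (ys : seq Y) : T :=
  foldr op z [seq g p.1 p.2 | p <- zip xs ys].

Let le_opr u v w : le u v -> le (op w u) (op w v).
Proof. by rewrite ![op w _]opC; apply: le_opl. Qed.

Lemma pairsum_cons_cat_cons a m b r c ys1 d ys2 : size m = size ys1 ->
  pairsum (a :: m ++ b :: r) (c :: ys1 ++ d :: ys2)
    = op (op (g a c) (g b d)) (pairsum (m ++ r) (ys1 ++ ys2)).
Proof.
move=> sz; rewrite /pairsum /= zip_cat // map_cat /= (foldr_cat_cons _ opA opC) opA.
by rewrite -map_cat -zip_cat.
Qed.

Lemma pairsum_exchange a b m r c ys : leX a b -> path leY c ys ->
  size (m ++ b :: r) = size ys ->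
  le (pairsum (b :: m ++ a :: r) (c :: ys)) (pairsum (a :: m ++ b :: r) (c :: ys)).
Proof.
move=> ab c_ys; rewrite size_cat /= => sz.
have := cat_take_drop (size m) ys.
case: (drop (size m) ys) (size_drop (size m) ys) => [|d ys2]; rewrite -sz addKn // => _ ys_eq.
have sz1 : size m = size (take (size m) ys) by rewrite size_takel // -sz leq_addr.
have cd : leY c d.
  by apply: (allP (order_path_min leY_trans c_ys)); rewrite -ys_eq mem_cat mem_head orbT.
by rewrite -ys_eq !pairsum_cons_cat_cons //; apply/le_opl/exchange.
Qed.

Lemma pairsum_sorted_max ys xs ls : sorted leY ys -> sorted leX xs ->
  size xs = size ys -> perm_eq ls xs -> le (pairsum ls ys) (pairsum xs ys).
Proof.
elim: ys xs ls => [|c ys IH] [|a xs] ls //= ys_sorted xs_sorted.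
  by move=> _ /perm_nilP ->.
move=> [sz] ls_xs.
have head_le ls' : perm_eq ls' xs ->
    le (pairsum (a :: ls') (c :: ys)) (pairsum (a :: xs) (c :: ys)).
  by move=> ls'_xs; apply/le_opr/IH => //; apply: path_sorted;
    [exact: ys_sorted | exact: xs_sorted].
have : a \in ls by rewrite (perm_mem ls_xs) mem_head.
case: ls ls_xs => [|b ls'] // ls_xs; rewrite in_cons.
case: eqVneq ls_xs => [<- ls_xs _|ab ls_xs /= a_ls'].
  by apply: head_le; rewrite -(perm_cons a).
move: ls_xs; case/splitPr: a_ls' => m r ls_xs.
have b_xs : b \in xs.
  by have := mem_head b (m ++ a :: r); rewrite (perm_mem ls_xs) in_cons eq_sym (negbTE ab).
have mbr_xs : perm_eq (m ++ b :: r) xs.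
  by rewrite -(perm_cons a); apply: perm_trans ls_xs; apply: perm_swap_heads.
apply: le_trans (head_le _ mbr_xs); apply: pairsum_exchange => //.
  exact: (allP (order_path_min leX_trans xs_sorted)).
by rewrite (perm_size mbr_xs).
Qed.

End Rearrangement.

Lemma sorted_map_enum_ord (T : Type) (r : rel T) n (f : 'I_n -> T) :
  (forall i j : 'I_n, (i <= j)%N -> r (f i) (f j)) -> sorted r [seq f i | i <- enum 'I_n].
Proof.
move=> f_homo; rewrite sorted_map.
have : sorted (relpre val leq) (enum 'I_n) by rewrite -sorted_map val_enum_ord iota_sorted.
by apply: sub_sorted => i j; apply: f_homo.
Qed.

Lemma perm_map_enum_ord (T : eqType) n (x : 'I_n -> T) (f : 'I_n -> 'I_n) :
  injective f -> perm_eq [seq x (f i) | i <- enum 'I_n] [seq x i | i <- enum 'I_n].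
Proof.
move=> f_inj; rewrite (map_comp x f); apply: perm_map.
apply: uniq_perm => [|| i]; first by rewrite map_inj_uniq // enum_uniq.
- exact: enum_uniq.
by rewrite -codomE mem_enum (injF_onto f_inj).
Qed.

(* Clamping the arguments to [0,1] extends a uninorm to an operation on all of
   [R] that is associative, commutative and monotone everywhere, which removes
   every [0,1]-membership side condition from the exchange argument. *)
Section UnitClamp.
Variable R : realType.

Definition clamp01 (x : R) : R := Num.max 0 (Num.min x 1).

Lemma clamp01_unit x : unit_int (clamp01 x).
Proof. by rewrite /unit_int /clamp01 le_max lexx /= ge_max ler01 ge_min lexx orbT. Qed.

Lemma clamp01_id x : unit_int x -> clamp01 x = x.
Proof. by case/andP=> x0 x1; rewrite /clamp01 (min_l x1) (max_r x0). Qed.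

Lemma le_clamp01 : {homo clamp01 : x y / x <= y}.
Proof. by move=> x y xy; rewrite /clamp01 le_max2 // le_min2. Qed.

Definition clamp_op (f : R -> R -> R) (x y : R) : R := f (clamp01 x) (clamp01 y).

Lemma clamp_opE f x y : unit_int x -> unit_int y -> clamp_op f x y = f x y.
Proof. by move=> x01 y01; rewrite /clamp_op !clamp01_id. Qed.

Variable f : R -> R -> R.
Hypothesis fU : uninorm f.

Lemma clamp_op_unit x y : unit_int (clamp_op f x y).
Proof. by case: fU => f01 _ _ _ _; apply: f01; apply: clamp01_unit. Qed.

Lemma clamp_opC : commutative (clamp_op f).
Proof. by case: fU => _ fC _ _ _ x y; apply: fC; apply: clamp01_unit. Qed.

Lemma clamp_opA : associative (clamp_op f).
Proof.
case: fU => f01 _ fA _ _ x y z; rewrite /clamp_op.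
by rewrite ![clamp01 (f _ _)]clamp01_id ?fA ?f01 ?clamp01_unit.
Qed.

Lemma le_clamp_opl x y z : x <= y -> clamp_op f x z <= clamp_op f y z.
Proof. by case: fU => _ _ _ fle _ xy; apply: fle; rewrite ?clamp01_unit ?le_clamp01. Qed.

Lemma opsum_foldr_clamp e (s : seq R) : unit_int e -> (forall x, unit_int x -> f e x = x) ->
  s != [::] -> all (@unit_int R) s -> opsum f s = foldr (clamp_op f) e s.
Proof.
move=> e01 eK; case: fU => _ fC _ _ _.
elim: s => [|a [|b s] IH] // _ /andP[a01 s01].
  by rewrite /= clamp_opE // fC // eK.
rewrite -[LHS]/(f a (opsum f (b :: s))) IH //.
by rewrite [RHS]/= clamp_opE ?clamp_op_unit.
Qed.

End UnitClamp.

Lemma propA'_le (R : realType) (f : R -> R -> R) :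
  (forall x y, unit_int x -> unit_int y -> f x y = f y x) -> propA' f ->
  forall p u v q, 0 <= p -> p <= u -> p <= v -> u <= q -> v <= q -> q <= 1 ->
  u + v <= p + q -> f u v <= f p q.
Proof.
move=> fC fA' p u v q p0 pu pv uq vq q1 uvpq.
have [uv|/ltW vu] := leP u v; first by apply: fA' => //; lra.
have between t : p <= t -> t <= q -> unit_int t by move=> pt tq; apply/andP; split; lra.
by rewrite fC ?between //; apply: fA' => //; lra.
Qed.

Lemma uninorm_exchange (R : realType) (tn sn : R -> R -> R) :
  uninorm tn -> (forall x y, unit_int x -> unit_int y -> sn x y = sn y x) ->
  propB tn -> propA' sn ->
  forall a b c d, unit_int a -> unit_int b -> unit_int c -> unit_int d ->
  a <= b -> c <= d -> sn (tn b c) (tn a d) <= sn (tn a c) (tn b d).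
Proof.
move=> [tn01 tnC _ tnle _] snC tnB snA' a b c d a01 b01 c01 d01 ab cd.
have tnler x y z : unit_int x -> unit_int y -> unit_int z -> x <= y -> tn z x <= tn z y.
  by move=> x01 y01 z01 xy; rewrite !(tnC z) //; apply: tnle.
have /andP[ac_ge0 _] := tn01 a c a01 c01.
have /andP[_ bd_le1] := tn01 b d b01 d01.
have := tnB a b c d a01 b01 c01 d01 ab cd => exch.
by apply: propA'_le => //; [apply: tnle | apply: tnler | apply: tnler | apply: tnle | lra].
Qed.

Section UninormRearrangement.
Variables (R : realType) (tn sn : R -> R -> R).
Hypotheses (tnU : uninorm tn) (snU : uninorm sn) (tnB : propB tn) (snA' : propA' sn).

Local Notation F := (clamp_op sn).
Local Notation G := (clamp_op tn).

Lemma clamp_op_exchange a b c d : a <= b -> c <= d -> F (G b c) (G a d) <= F (G a c) (G b d).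
Proof.
move=> ab cd; rewrite !(clamp_opE sn) ?(clamp_op_unit tnU) //.
have [_ snC _ _ _] := snU.
by apply: (uninorm_exchange tnU snC tnB snA'); rewrite ?clamp01_unit ?le_clamp01.
Qed.

Lemma pairsum_sorted_le z ys xs ls : sorted <=%R ys -> sorted <=%R xs ->
  size xs = size ys -> perm_eq ls xs -> pairsum F z G ls ys <= pairsum F z G xs ys.
Proof.
exact: (@pairsum_sorted_max R R R _ _ _ le_trans le_trans lexx le_trans _ z _
  (clamp_opA snU) (clamp_opC snU) (le_clamp_opl snU) clamp_op_exchange).
Qed.

Lemma pairsum_sorted_ge z ys xs ls : sorted <=%R ys -> sorted >=%R xs ->
  size xs = size ys -> perm_eq ls xs -> pairsum F z G xs ys <= pairsum F z G ls ys.
Proof.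
have exchange_ge a b c d : b <= a -> c <= d -> F (G a c) (G b d) <= F (G b c) (G a d).
  exact: clamp_op_exchange.
exact: (@pairsum_sorted_max R R R >=%R <=%R >=%R ge_trans le_trans lexx ge_trans _ z _
  (clamp_opA snU) (clamp_opC snU) (fun u v w => le_clamp_opl snU w) exchange_ge).
Qed.

Lemma opsum_pairsum e (I : Type) (r : seq I) (x y : I -> R) :
  unit_int e -> (forall u, unit_int u -> sn e u = u) -> (0 < size r)%N ->
  (forall i, unit_int (x i)) -> (forall i, unit_int (y i)) ->
  opsum sn [seq tn (x i) (y i) | i <- r] = pairsum F e G (map x r) (map y r).
Proof.
move=> e01 eK r_gt0 x01 y01; have [tn01 _ _ _ _] := tnU.
rewrite (opsum_foldr_clamp snU e01 eK); last 2 first.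
- by rewrite -size_eq0 size_map -lt0n.
- by elim: r {r_gt0} => //= i r ->; rewrite tn01.
by rewrite /pairsum zip_map -map_comp; congr foldr; apply: eq_map => i /=; rewrite clamp_opE.
Qed.

End UninormRearrangement.

Theorem theorem6 (R : realType) (tn sn : R -> R -> R) :
  uninorm tn -> uninorm sn -> propB tn -> propA' sn -> rearrangement tn sn.
Proof.
move=> tnU snU tnB snA' n x y n_gt0 x01 y01 x_homo y_homo s.
have [_ _ _ _ [e e01 eK]] := snU.
have sumE (f : 'I_n -> 'I_n) : opsum sn [seq tn (x (f i)) (y i) | i <- enum 'I_n]
    = pairsum (clamp_op sn) e (clamp_op tn)
        [seq x (f i) | i <- enum 'I_n] [seq y i | i <- enum 'I_n].
  by apply: opsum_pairsum; rewrite ?size_enum_ord.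
have ys_sorted : sorted <=%R [seq y i | i <- enum 'I_n] by apply: sorted_map_enum_ord.
have xs_perm : perm_eq [seq x (s i) | i <- enum 'I_n] [seq x i | i <- enum 'I_n].
  by apply: perm_map_enum_ord; apply: perm_inj.
rewrite (sumE (@rev_ord n)) (sumE s) (sumE id) /=; split.
- apply: pairsum_sorted_ge; rewrite ?size_map //.
    by apply: sorted_map_enum_ord => i j ij; apply: x_homo; rewrite leq_sub2l.
  apply: perm_trans xs_perm _; rewrite perm_sym.
  by apply: perm_map_enum_ord; apply: rev_ord_inj.
- apply: pairsum_sorted_le; rewrite ?size_map //.
  exact: sorted_map_enum_ord.
Qed.
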